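(* Let $(f_n)_{n\ge 0}$ be a sequence of positive real numbers (not depending on $a$) and, for $a>0$, let \[ f(a,x)=\sum_{n=0}^{\infty} f_n\frac{(a)_n}{n!}x^n , \] regarded as a formal power series in $x$. Let $b>a>0$ and $\delta>0$, and write \[ \varphi_{a,b,\delta}(x)=f(a+\delta,x)f(b,x)-f(b+\delta,x)f(a,x)=\sum_{m=0}^{\infty}\varphi_m x^m . \] Then $\varphi_0=\varphi_1=0$, and: (i) if the sequence $\{f_n/f_{n-1}\}_{n\ge1}$ is decreasing, then $\varphi_m>0$ for all $m\ge 2$, so that $a\mapsto f(a,x)$ is strictly log-concave for $x>0$; (ii) if the sequence $\{f_n/f_{n-1}\}_{n\ge1}$ is increasing, then $\varphi_m<0$ for all $m\ge 2$, so that $a\mapsto f(a,x)$ is strictly log-convex for $x>0$.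
   Context: $(a)_n=a(a+1)\cdots(a+n-1)=\Gamma(a+n)/\Gamma(a)$ is the Pochhammer symbol, $(a)_0=1$. Power series are understood formally; the log-concavity/log-convexity statements refer to values $x>0$ at which the series converge. *)

From Stdlib Require Import Reals.
From Coquelicot Require Import Coquelicot.
Open Scope R_scope.

Fixpoint poch (a : R) (n : nat) : R :=
  match n with
  | O => 1
  | S k => poch a k * (a + INR k)
  end.

Definition coef (f : nat -> R) (a : R) (n : nat) : R :=
  f n * poch a n / INR (Factorial.fact n).

(* value of the series f(a,x) (meaningful when it converges) *)
Definition fser (f : nat -> R) (a x : R) : R :=
  Series (fun n => coef f a n * x ^ n).

(* m-th coefficient of the formal power series
   phi_{a,b,delta}(x) = f(a+d,x) f(b,x) - f(b+d,x) f(a,x)  (Cauchy product) *)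
Definition phi (f : nat -> R) (a b d : R) (m : nat) : R :=
  sum_f_R0 (fun k => coef f (a + d) k * coef f b (m - k)
                     - coef f (b + d) k * coef f a (m - k)) m.

Definition strictly_concave_pos (g : R -> R) : Prop :=
  forall u v t, 0 < u -> 0 < v -> u <> v -> 0 < t < 1 ->
    t * g u + (1 - t) * g v < g (t * u + (1 - t) * v).

Definition strictly_convex_pos (g : R -> R) : Prop :=
  forall u v t, 0 < u -> 0 < v -> u <> v -> 0 < t < 1 ->
    g (t * u + (1 - t) * v) < t * g u + (1 - t) * g v.

From Stdlib Require Import Reals Lra Lia.
From Coquelicot Require Import Coquelicot.
Open Scope R_scope.

(* Expanding [(a + d)_k] and [(b + d)_k] by Chu-Vandermonde writes [phi_m] as a sum of
   positive multiples [(d)_i / i!] of blocks.  Pairing each index [j] of the [i]-th block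
   with its mirror image [m - i - j] makes the block a sum of products
   [(f_(p+i) f_q - f_p f_(q+i)) ((a)_p (b)_q - (a)_q (b)_p) / (p! q!)] with [p <= q]:
   the first factor has the sign of the log-concavity of [f], the second is [>= 0]
   because [a < b], and the block [i = 1] has a strictly signed term, so [phi_m] is
   signed for [m >= 2].  Summing the Cauchy product, [f(a+d,x) f(b,x) - f(b+d,x) f(a,x)]
   has the same sign, i.e. the increments of [ln f(., x)] are strictly monotone; a
   monotone function with monotone increments is continuous, hence strictly concave
   (resp. convex). *)

Lemma sum_f_R0_rev (h : nat -> R) N :
  sum_f_R0 (fun j => h (N - j)%nat) N = sum_f_R0 h N.
Proof.
  induction N as [|N IH]; [reflexivity|].
  rewrite decomp_sum by lia; simpl pred.
  rewrite tech5, Nat.sub_0_r, <- IH, Rplus_comm; reflexivity.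
Qed.

Lemma sum_f_R0_swap_triangle (h : nat -> nat -> R) m :
  sum_f_R0 (fun k => sum_f_R0 (fun i => h i k) k) m =
  sum_f_R0 (fun i => sum_f_R0 (fun j => h i (i + j)%nat) (m - i)) m.
Proof.
  induction m as [|m IH]; [reflexivity|].
  rewrite tech5, IH, (tech5 (fun i => sum_f_R0 _ (S m - i))).
  replace (S m - S m)%nat with 0%nat by lia; simpl (sum_f_R0 _ 0).
  rewrite tech5, Nat.add_0_r, <- Rplus_assoc; f_equal.
  rewrite <- plus_sum; apply sum_eq; intros i Hi.
  replace (S m - i)%nat with (S (m - i)) by lia; rewrite tech5.
  replace (i + S (m - i))%nat with (S m) by lia; reflexivity.
Qed.

Lemma sum_f_R0_nonneg (h : nat -> R) n :
  (forall i, (i <= n)%nat -> 0 <= h i) -> 0 <= sum_f_R0 h n.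
Proof.
  induction n as [|n IH]; intro Hh; simpl; [apply Hh; lia|].
  pose proof (Hh (S n) (le_n _)); assert (0 <= sum_f_R0 h n) by (apply IH; auto).
  lra.
Qed.

Lemma sum_f_R0_ge_term (h : nat -> R) n k :
  (forall i, (i <= n)%nat -> 0 <= h i) -> (k <= n)%nat -> h k <= sum_f_R0 h n.
Proof.
  intros Hh Hk; induction n as [|n IH]; simpl.
  - replace k with 0%nat by lia; lra.
  - assert (Hh' : forall i, (i <= n)%nat -> 0 <= h i) by (intros; apply Hh; lia).
    pose proof (Hh (S n) (le_n _)); pose proof (sum_f_R0_nonneg h n Hh').
    destruct (Nat.eq_dec k (S n)) as [->|Hne]; [lra|].
    assert (h k <= sum_f_R0 h n) by (apply IH; [exact Hh' | lia]); lra.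
Qed.

Lemma sum_f_R0_reflect (F G : nat -> R) i N :
  (forall j, (j <= N)%nat -> F (i + (N - j))%nat = F j) ->
  2 * sum_f_R0 (fun j => F (i + j)%nat * (G j - G (N - j)%nat)) N =
  sum_f_R0 (fun j => (F (i + j)%nat - F j) * (G j - G (N - j)%nat)) N.
Proof.
  intro HF.
  assert (Hrev : sum_f_R0 (fun j => F (i + j)%nat * (G j - G (N - j)%nat)) N =
                 sum_f_R0 (fun j => F j * (G (N - j)%nat - G j)) N).
  { rewrite <- (sum_f_R0_rev (fun j => F (i + j)%nat * _)).
    apply sum_eq; intros j Hj.
    rewrite HF by lia; replace (N - (N - j))%nat with j by lia; reflexivity. }
  transitivity (sum_f_R0 (fun j => F (i + j)%nat * (G j - G (N - j)%nat)) N
              + sum_f_R0 (fun j => F j * (G (N - j)%nat - G j)) N).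
  { rewrite <- Hrev; ring. }
  rewrite <- plus_sum; apply sum_eq; intros; ring.
Qed.

Lemma poch_pos al n : 0 < al -> 0 < poch al n.
Proof.
  intro Hal; induction n as [|n IH]; simpl; [lra|].
  pose proof (pos_INR n); apply Rmult_lt_0_compat; lra.
Qed.

Lemma poch_le_compat u v n : 0 < u -> u <= v -> poch u n <= poch v n.
Proof.
  intros Hu Huv; induction n as [|n IH]; simpl; [lra|].
  pose proof (poch_pos u n Hu); pose proof (pos_INR n).
  apply Rmult_le_compat; lra.
Qed.

(* [negbin al k = (al)_k / k!] is the coefficient of [x^k] in [(1 - x)^(-al)]. *)
Definition negbin (al : R) (k : nat) : R := poch al k / INR (Factorial.fact k).

Lemma coef_negbin f al k : coef f al k = f k * negbin al k.
Proof. unfold coef, negbin; field. pose proof (INR_fact_lt_0 k); lra. Qed.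

Lemma negbin_pos al k : 0 < al -> 0 < negbin al k.
Proof.
  intro Hal; apply Rdiv_lt_0_compat; [now apply poch_pos | apply INR_fact_lt_0].
Qed.

Lemma negbin_0 al : negbin al 0 = 1.
Proof. unfold negbin; simpl; field. Qed.

Lemma negbin_succ al k : INR (S k) * negbin al (S k) = (al + INR k) * negbin al k.
Proof.
  unfold negbin; rewrite fact_simpl, mult_INR; simpl poch.
  pose proof (INR_fact_lt_0 k); assert (0 < INR (S k)) by (apply lt_0_INR; lia).
  field; lra.
Qed.

(* Chu-Vandermonde: [(1 - x)^(-al) (1 - x)^(-be) = (1 - x)^(-(al + be))]. *)
Lemma negbin_add al be n :
  negbin (al + be) n = sum_f_R0 (fun i => negbin al i * negbin be (n - i)) n.
Proof.
  induction n as [|n IH].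
  { simpl; rewrite !negbin_0; ring. }
  assert (Hn : 0 < INR (S n)) by (apply lt_0_INR; lia).
  apply Rmult_eq_reg_l with (INR (S n)); [|lra].
  rewrite negbin_succ, IH; symmetry.
  (* split the weight [S n] as [i + (S n - i)] and shift each half by one *)
  transitivity (sum_f_R0 (fun i => INR i * (negbin al i * negbin be (S n - i))) (S n)
              + sum_f_R0 (fun i => INR (S n - i) * (negbin al i * negbin be (S n - i))) (S n)).
  { rewrite <- plus_sum, scal_sum; apply sum_eq; intros i Hi.
    rewrite <- Rmult_plus_distr_r, <- plus_INR.
    replace (i + (S n - i))%nat with (S n) by lia; ring. }
  rewrite decomp_sum by lia; simpl pred; rewrite tech5.
  replace (S n - S n)%nat with 0%nat by lia; rewrite !INR_0.
  rewrite !Rmult_0_l, Rplus_0_l, Rplus_0_r.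
  transitivity (sum_f_R0 (fun i => (al + INR i) * (negbin al i * negbin be (n - i))) n
              + sum_f_R0 (fun i => (be + INR (n - i)) * (negbin al i * negbin be (n - i))) n).
  - f_equal; apply sum_eq; intros i Hi.
    + replace (S n - S i)%nat with (n - i)%nat by lia.
      rewrite <- Rmult_assoc, negbin_succ; ring.
    + replace (S n - i)%nat with (S (n - i)) by lia.
      transitivity (negbin al i * (INR (S (n - i)) * negbin be (S (n - i)))); [ring|].
      rewrite negbin_succ; ring.
  - rewrite <- plus_sum, (scal_sum _ n); symmetry; apply sum_eq; intros i Hi.
    assert (INR n = INR i + INR (n - i)) by (rewrite <- plus_INR; f_equal; lia).
    replace (al + be + INR n) with ((al + INR i) + (be + INR (n - i))) by lra; ring.
Qed.

Lemma negbin_cross_le a b p k : 0 < a -> a <= b ->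
  negbin a (p + k) * negbin b p <= negbin a p * negbin b (p + k).
Proof.
  intros Ha Hab; induction k as [|k IH].
  { rewrite Nat.add_0_r; lra. }
  rewrite Nat.add_succ_r.
  assert (Hn : 0 < INR (S (p + k))) by (apply lt_0_INR; lia).
  apply Rmult_le_reg_l with (INR (S (p + k))); [exact Hn|].
  replace (INR (S (p + k)) * (negbin a (S (p + k)) * negbin b p))
    with ((a + INR (p + k)) * negbin a (p + k) * negbin b p)
    by (rewrite <- negbin_succ; ring).
  replace (INR (S (p + k)) * (negbin a p * negbin b (S (p + k))))
    with ((b + INR (p + k)) * negbin b (p + k) * negbin a p)
    by (rewrite <- negbin_succ; ring).
  pose proof (negbin_pos a p Ha); pose proof (negbin_pos b (p + k) ltac:(lra)).
  pose proof (pos_INR (p + k)).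
  apply Rle_trans with ((a + INR (p + k)) * (negbin a p * negbin b (p + k))).
  - rewrite Rmult_assoc; apply Rmult_le_compat_l; lra.
  - assert (0 < negbin a p * negbin b (p + k)) by (apply Rmult_lt_0_compat; lra).
    nra.
Qed.

Lemma negbin_cross_lt a b p q : 0 < a -> a < b -> (p < q)%nat ->
  negbin a q * negbin b p < negbin a p * negbin b q.
Proof.
  intros Ha Hab Hpq; destruct q as [|q]; [lia|].
  replace q with (p + (q - p))%nat by lia; set (k := (q - p)%nat).
  assert (Hn : 0 < INR (S (p + k))) by (apply lt_0_INR; lia).
  apply Rmult_lt_reg_l with (INR (S (p + k))); [exact Hn|].
  replace (INR (S (p + k)) * (negbin a (S (p + k)) * negbin b p))
    with ((a + INR (p + k)) * negbin a (p + k) * negbin b p)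
    by (rewrite <- negbin_succ; ring).
  replace (INR (S (p + k)) * (negbin a p * negbin b (S (p + k))))
    with ((b + INR (p + k)) * negbin b (p + k) * negbin a p)
    by (rewrite <- negbin_succ; ring).
  pose proof (negbin_cross_le a b p k Ha ltac:(lra)).
  pose proof (negbin_pos a (p + k) Ha); pose proof (negbin_pos b p ltac:(lra)).
  pose proof (negbin_pos a p Ha); pose proof (negbin_pos b (p + k) ltac:(lra)).
  pose proof (pos_INR (p + k)).
  assert (0 < negbin a p * negbin b (p + k)) by nra.
  nra.
Qed.

Definition phi_block (f : nat -> R) (a b : R) (m i : nat) : R :=
  sum_f_R0 (fun j => f (i + j)%nat * f (m - (i + j))%nat *
    (negbin a j * negbin b (m - i - j) - negbin b j * negbin a (m - i - j))) (m - i).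

Lemma phi_decomp f a b d m :
  phi f a b d m = sum_f_R0 (fun i => negbin d i * phi_block f a b m i) m.
Proof.
  unfold phi.
  transitivity (sum_f_R0 (fun k => sum_f_R0 (fun i =>
     negbin d i * (f k * f (m - k)%nat * (negbin a (k - i) * negbin b (m - k)
                                      - negbin b (k - i) * negbin a (m - k)))) k) m).
  - apply sum_eq; intros k Hk; rewrite !coef_negbin.
    rewrite (Rplus_comm a), (Rplus_comm b), !negbin_add.
    transitivity (f k * f (m - k)%nat *
      (negbin b (m - k) * sum_f_R0 (fun i => negbin d i * negbin a (k - i)) k
     - negbin a (m - k) * sum_f_R0 (fun i => negbin d i * negbin b (k - i)) k)); [ring|].
    rewrite !scal_sum, <- minus_sum, scal_sum.
    apply sum_eq; intros i Hi; ring.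
  - rewrite sum_f_R0_swap_triangle; apply sum_eq; intros i Hi.
    unfold phi_block; rewrite scal_sum.
    apply sum_eq; intros j Hj.
    replace (i + j - i)%nat with j by lia.
    replace (m - (i + j))%nat with (m - i - j)%nat by lia; ring.
Qed.

(* With [s = 1] this is strict log-concavity of [f] in cross-multiplied form, with
   [s = -1] strict log-convexity. *)
Definition signed_log_concave (s : R) (f : nat -> R) : Prop :=
  (forall p q k, (p <= q)%nat -> 0 <= s * (f (p + k)%nat * f q - f p * f (q + k)%nat)) /\
  (forall p q, (p < q)%nat -> 0 < s * (f (S p) * f q - f p * f (S q))).

Section DecreasingRatio.
Variable f : nat -> R.
Hypothesis f_pos : forall n, 0 < f n.
Hypothesis ratio_decr : forall n, f (S (S n)) / f (S n) < f (S n) / f n.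

Lemma ratio_decr_lt p q : (p < q)%nat -> f (S q) / f q < f (S p) / f p.
Proof.
  induction 1 as [|q _ IH]; [apply ratio_decr|].
  exact (Rlt_trans _ _ _ (ratio_decr q) IH).
Qed.

Lemma cross_lt_of_ratio_decr p q : (p < q)%nat -> f p * f (S q) < f (S p) * f q.
Proof.
  intro Hpq; pose proof (ratio_decr_lt p q Hpq) as H.
  pose proof (f_pos p); pose proof (f_pos q).
  apply Rmult_lt_compat_r with (r := f p * f q) in H; [|nra].
  replace (f (S q) / f q * (f p * f q)) with (f p * f (S q)) in H by (field; lra).
  replace (f (S p) / f p * (f p * f q)) with (f (S p) * f q) in H by (field; lra).
  exact H.
Qed.

Lemma cross_le_of_ratio_decr p q k : (p <= q)%nat ->
  f p * f (q + k)%nat <= f (p + k)%nat * f q.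
Proof.
  intro Hpq; induction k as [|k IH].
  { rewrite !Nat.add_0_r; lra. }
  rewrite !Nat.add_succ_r.
  assert (Hstep : f (p + k)%nat * f (S (q + k)) <= f (S (p + k)) * f (q + k)%nat).
  { destruct (Nat.eq_dec p q) as [->|Hne]; [lra|].
    left; apply cross_lt_of_ratio_decr; lia. }
  pose proof (f_pos p); pose proof (f_pos q); pose proof (f_pos (p + k));
    pose proof (f_pos (q + k)); pose proof (f_pos (S (p + k))); pose proof (f_pos (S (q + k))).
  apply Rmult_le_reg_r with (f (p + k)%nat * f (q + k)%nat); [nra|].
  transitivity ((f p * f (q + k)%nat) * (f (p + k)%nat * f (S (q + k)))); [right; ring|].
  transitivity ((f (p + k)%nat * f q) * (f (S (p + k)) * f (q + k)%nat)); [|right; ring].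
  apply Rmult_le_compat; [nra | nra | exact IH | exact Hstep].
Qed.

Lemma signed_log_concave_of_ratio_decr : signed_log_concave 1 f.
Proof.
  split.
  - intros p q k Hpq; pose proof (cross_le_of_ratio_decr p q k Hpq); lra.
  - intros p q Hpq; pose proof (cross_lt_of_ratio_decr p q Hpq); lra.
Qed.
End DecreasingRatio.

Lemma signed_log_concave_of_ratio_incr f : (forall n, 0 < f n) ->
  (forall n, f (S n) / f n < f (S (S n)) / f (S n)) -> signed_log_concave (-1) f.
Proof.
  intros f_pos ratio_incr.
  set (g n := / f n).
  assert (g_pos : forall n, 0 < g n) by (intro; apply Rinv_0_lt_compat, f_pos).
  assert (Hg : forall n, g (S (S n)) / g (S n) < g (S n) / g n).
  { intro n; unfold g; pose proof (f_pos n); pose proof (f_pos (S n));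
      pose proof (f_pos (S (S n))).
    replace (/ f (S (S n)) / / f (S n)) with (/ (f (S (S n)) / f (S n))) by (field; lra).
    replace (/ f (S n) / / f n) with (/ (f (S n) / f n)) by (field; lra).
    apply Rinv_lt_contravar; [|apply ratio_incr].
    apply Rmult_lt_0_compat; apply Rdiv_lt_0_compat; auto. }
  (* [g = 1 / f] is log-concave, and clearing denominators flips every cross product *)
  assert (Hflip : forall p q p' q', g p * g q <= g p' * g q' -> f p' * f q' <= f p * f q).
  { intros p q p' q' H; unfold g in H.
    pose proof (f_pos p); pose proof (f_pos q); pose proof (f_pos p'); pose proof (f_pos q').
    rewrite <- !Rinv_mult in H.
    rewrite <- (Rinv_inv (f p * f q)), <- (Rinv_inv (f p' * f q')).
    apply Rinv_le_contravar; [apply Rinv_0_lt_compat; nra | exact H]. }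
  split.
  - intros p q k Hpq.
    pose proof (Hflip _ _ _ _ (cross_le_of_ratio_decr g g_pos Hg p q k Hpq)); lra.
  - intros p q Hpq.
    pose proof (cross_lt_of_ratio_decr g g_pos Hg p q Hpq) as H; unfold g in H.
    pose proof (f_pos p); pose proof (f_pos q); pose proof (f_pos (S p));
      pose proof (f_pos (S q)).
    rewrite <- !Rinv_mult in H.
    apply Rinv_lt_cancel in H; [lra | nra].
Qed.

Lemma phi_0 f a b d : phi f a b d 0 = 0.
Proof. unfold phi, coef; simpl; field. Qed.

Lemma phi_1 f a b d : phi f a b d 1 = 0.
Proof. unfold phi, coef; simpl; field. Qed.

Section PhiSign.
Variables (f : nat -> R) (s a b : R).
Hypothesis f_lc : signed_log_concave s f.
Hypotheses (ha : 0 < a) (hab : a < b).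

Lemma phi_block_term_nonneg m i j : (i <= m)%nat -> (j <= m - i)%nat ->
  0 <= s * ((f (i + j)%nat * f (m - (i + j))%nat - f j * f (m - j)%nat) *
            (negbin a j * negbin b (m - i - j) - negbin a (m - i - j) * negbin b j)).
Proof.
  intros Hi Hj; destruct f_lc as [Hle _].
  (* the smaller of [j] and its mirror image [m - i - j] plays [p] *)
  destruct (Compare_dec.le_lt_dec (2 * j) (m - i)) as [H2|H2].
  - pose proof (Hle j (m - i - j)%nat i ltac:(lia)) as K.
    replace (j + i)%nat with (i + j)%nat in K by lia.
    replace (m - i - j + i)%nat with (m - j)%nat in K by lia.
    replace (m - (i + j))%nat with (m - i - j)%nat by lia.
    pose proof (negbin_cross_le a b j (m - i - j - j) ha ltac:(lra)) as G.
    replace (j + (m - i - j - j))%nat with (m - i - j)%nat in G by lia.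
    nra.
  - pose proof (Hle (m - i - j)%nat j i ltac:(lia)) as K.
    replace (m - i - j + i)%nat with (m - j)%nat in K by lia.
    replace (j + i)%nat with (i + j)%nat in K by lia.
    replace (m - (i + j))%nat with (m - i - j)%nat by lia.
    pose proof (negbin_cross_le a b (m - i - j) (j - (m - i - j)) ha ltac:(lra)) as G.
    replace (m - i - j + (j - (m - i - j)))%nat with j in G by lia.
    nra.
Qed.

Lemma phi_block_twice m i : (i <= m)%nat ->
  2 * (s * phi_block f a b m i) =
  sum_f_R0 (fun j => s * ((f (i + j)%nat * f (m - (i + j))%nat - f j * f (m - j)%nat) *
            (negbin a j * negbin b (m - i - j) - negbin a (m - i - j) * negbin b j))) (m - i).
Proof.
  intro Hi.
  pose (F k := f k * f (m - k)%nat).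
  pose (G j := negbin a j * negbin b (m - i - j)).
  assert (Hblock : phi_block f a b m i =
    sum_f_R0 (fun j => F (i + j)%nat * (G j - G (m - i - j)%nat)) (m - i)).
  { apply sum_eq; intros j Hj; unfold F, G.
    replace (m - i - (m - i - j))%nat with j by lia; ring. }
  assert (HF : forall j, (j <= m - i)%nat -> F (i + (m - i - j))%nat = F j).
  { intros j Hj; unfold F.
    replace (i + (m - i - j))%nat with (m - j)%nat by lia.
    replace (m - (m - j))%nat with j by lia; ring. }
  rewrite Hblock, <- Rmult_assoc, (Rmult_comm 2), Rmult_assoc, sum_f_R0_reflect by exact HF.
  rewrite scal_sum; apply sum_eq; intros j Hj; unfold F, G.
  replace (m - i - (m - i - j))%nat with j by lia; ring.
Qed.

Lemma phi_block_nonneg m i : (i <= m)%nat -> 0 <= s * phi_block f a b m i.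
Proof.
  intro Hi; pose proof (phi_block_twice m i Hi) as E.
  assert (0 <= 2 * (s * phi_block f a b m i)); [|lra].
  rewrite E; apply sum_f_R0_nonneg; intros j Hj; apply phi_block_term_nonneg; lia.
Qed.

Lemma phi_block_1_pos m : (2 <= m)%nat -> 0 < s * phi_block f a b m 1.
Proof.
  intro Hm; pose proof (phi_block_twice m 1 ltac:(lia)) as E.
  assert (Hterm0 : 0 < s * ((f 1%nat * f (m - 1)%nat - f 0%nat * f m) *
                            (negbin b (m - 1) - negbin a (m - 1)))).
  { destruct f_lc as [_ Hlt].
    pose proof (Hlt 0%nat (m - 1)%nat ltac:(lia)) as K.
    replace (S (m - 1)) with m in K by lia.
    pose proof (negbin_cross_lt a b 0 (m - 1) ha hab ltac:(lia)) as G.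
    rewrite !negbin_0 in G; nra. }
  assert (0 < 2 * (s * phi_block f a b m 1)); [|lra].
  rewrite E; eapply Rlt_le_trans; [|apply sum_f_R0_ge_term with (k := 0%nat)].
  - simpl; rewrite !Nat.sub_0_r, !negbin_0.
    replace (m - 1 - 0)%nat with (m - 1)%nat by lia.
    rewrite Rmult_1_l, Rmult_1_r; exact Hterm0.
  - intros j Hj; apply phi_block_term_nonneg; lia.
  - lia.
Qed.

Lemma phi_sign d m : 0 < d -> (2 <= m)%nat -> 0 < s * phi f a b d m.
Proof.
  intros hd Hm; rewrite phi_decomp, scal_sum.
  assert (Hterm : forall i, (i <= m)%nat -> 0 <= negbin d i * phi_block f a b m i * s).
  { intros i Hi; pose proof (negbin_pos d i hd); pose proof (phi_block_nonneg m i Hi); nra. }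
  eapply Rlt_le_trans; [|apply sum_f_R0_ge_term with (k := 1%nat); [exact Hterm | lia]].
  pose proof (negbin_pos d 1 hd); pose proof (phi_block_1_pos m Hm); nra.
Qed.
End PhiSign.

Lemma continuity_pt_of_increment_bound (g : R -> R) c K :
  (forall u v, 0 < u -> u <= v -> g u <= g v) -> 0 < c ->
  (forall M : nat, exists w, 0 < w /\ forall y z,
     c - w < y -> y <= z -> z < c + w -> INR M * (g z - g y) <= K) ->
  continuity_pt g c.
Proof.
  intros g_mono Hc Hbound.
  unfold continuity_pt, continue_in, limit1_in, limit_in; simpl; unfold R_dist.
  intros eps Heps.
  destruct (archimed_cor1 (eps / (Rabs K + 1))) as [M [HM HM0]].
  { apply Rdiv_lt_0_compat; [lra | pose proof (Rabs_pos K); lra]. }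
  assert (HMpos : 0 < INR M) by (apply lt_0_INR; lia).
  assert (HKM : K < eps * INR M).
  { pose proof (Rle_abs K); pose proof (Rabs_pos K).
    apply Rmult_lt_compat_r with (r := INR M * (Rabs K + 1)) in HM; [|nra].
    replace (/ INR M * (INR M * (Rabs K + 1))) with (Rabs K + 1) in HM by (field; lra).
    replace (eps / (Rabs K + 1) * (INR M * (Rabs K + 1))) with (eps * INR M) in HM
      by (field; lra).
    lra. }
  destruct (Hbound M) as [w [Hw Hyz]].
  exists (Rmin w c); split; [now apply Rmin_pos|].
  intros y [_ Hy]; pose proof (Rmin_l w c); pose proof (Rmin_r w c).
  destruct (Rle_or_lt c y) as [Hcy|Hyc].
  - rewrite Rabs_right in Hy by lra.
    pose proof (Hyz c y ltac:(lra) Hcy ltac:(lra)); pose proof (g_mono c y Hc Hcy).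
    rewrite Rabs_right by lra; nra.
  - rewrite Rabs_left in Hy by lra.
    pose proof (Hyz y c ltac:(lra) ltac:(lra) ltac:(lra)).
    pose proof (g_mono y c ltac:(lra) ltac:(lra)).
    rewrite Rabs_left1 by lra; nra.
Qed.

Lemma pos_of_strict_midpoint_concave (h : R -> R) :
  (forall s, 0 <= s <= 1 -> continuity_pt h s) -> h 0 = 0 -> h 1 = 0 ->
  (forall s1 s2, 0 <= s1 <= 1 -> 0 <= s2 <= 1 -> s1 <> s2 ->
     (h s1 + h s2) / 2 < h ((s1 + s2) / 2)) ->
  forall t, 0 < t < 1 -> 0 < h t.
Proof.
  intros Hcont h0 h1 Hmid.
  assert (Hinner : forall t, 0 < t < 1 ->
            exists t1 t2, 0 <= t1 <= 1 /\ 0 <= t2 <= 1 /\ (h t1 + h t2) / 2 < h t).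
  { intros t Ht; pose proof (Rmin_l t (1 - t)); pose proof (Rmin_r t (1 - t)).
    assert (0 < Rmin t (1 - t)) by (apply Rmin_pos; lra).
    set (ep := Rmin t (1 - t)) in *.
    exists (t - ep), (t + ep); split; [lra | split; [lra|]].
    replace t with ((t - ep + (t + ep)) / 2) at 3 by field.
    apply Hmid; lra. }
  (* a negative minimum would be an interior point strictly above the mean of two others *)
  assert (Hnonneg : forall s, 0 <= s <= 1 -> 0 <= h s).
  { destruct (continuity_ab_min h 0 1 ltac:(lra) Hcont) as [mx [Hmin Hmx]].
    intros s Hs; apply Rle_trans with (h mx); [|apply Hmin, Hs].
    destruct (Rlt_or_le (h mx) 0) as [Hneg|]; [exfalso|assumption].
    assert (mx <> 0) by (intros ->; lra); assert (mx <> 1) by (intros ->; lra).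
    destruct (Hinner mx ltac:(lra)) as [t1 [t2 [H1 [H2 Hlt]]]].
    pose proof (Hmin t1 H1); pose proof (Hmin t2 H2); lra. }
  intros t Ht; destruct (Hinner t Ht) as [t1 [t2 [H1 [H2 Hlt]]]].
  pose proof (Hnonneg t1 H1); pose proof (Hnonneg t2 H2); lra.
Qed.

Lemma strictly_concave_pos_of_midpoint (g : R -> R) :
  (forall c, 0 < c -> continuity_pt g c) ->
  (forall p q, 0 < p -> p < q -> (g p + g q) / 2 < g ((p + q) / 2)) ->
  strictly_concave_pos g.
Proof.
  intros Hcont Hmid u v t Hu Hv Huv Ht.
  set (h s := g (s * u + (1 - s) * v) - (s * g u + (1 - s) * g v)).
  assert (Hpos : forall s, 0 <= s <= 1 -> 0 < s * u + (1 - s) * v)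
    by (intros s Hs; destruct (Req_dec s 0) as [->|]; nra).
  assert (0 < h t); [|unfold h in *; lra].
  apply pos_of_strict_midpoint_concave; [| | | |exact Ht].
  - intros s Hs; unfold h.
    apply continuity_pt_minus; [|reg].
    apply (continuity_pt_comp (fun s => s * u + (1 - s) * v) g); [reg|].
    apply Hcont, Hpos, Hs.
  - unfold h; replace (0 * u + (1 - 0) * v) with v by ring; ring.
  - unfold h; replace (1 * u + (1 - 1) * v) with u by ring; ring.
  - intros s1 s2 H1 H2 H12; unfold h.
    set (p1 := s1 * u + (1 - s1) * v); set (p2 := s2 * u + (1 - s2) * v).
    assert (Hne : p1 <> p2).
    { intro E; apply H12, Rmult_eq_reg_r with (u - v); unfold p1, p2 in E; lra. }
    replace ((s1 + s2) / 2 * u + (1 - (s1 + s2) / 2) * v) with ((p1 + p2) / 2)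
      by (unfold p1, p2; field).
    assert (K : (g p1 + g p2) / 2 < g ((p1 + p2) / 2)).
    { destruct (Rlt_or_le p1 p2) as [Hlt|Hle].
      - apply Hmid; [apply Hpos, H1 | exact Hlt].
      - replace (p1 + p2) with (p2 + p1) by ring.
        replace (g p1 + g p2) with (g p2 + g p1) by ring.
        apply Hmid; [apply Hpos, H2 | lra]. }
    lra.
Qed.

Section MonotoneIncrements.
Variable g : R -> R.
Hypothesis g_mono : forall u v, 0 < u -> u <= v -> g u <= g v.

Lemma increments_sum_le_decreasing :
  (forall a b d, 0 < a -> a < b -> 0 < d -> g (b + d) - g b <= g (a + d) - g a) ->
  forall y h (M : nat), 0 < h -> 0 < y - INR M * h ->
  INR M * (g (y + h) - g y) <= g y - g (y - INR M * h).
Proof.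
  intros Hdec y h M Hh; induction M as [|M IH]; intro Hy.
  - simpl; replace (y - 0 * h) with y by ring; lra.
  - rewrite S_INR in *; pose proof (pos_INR M).
    assert (Hy' : 0 < y - INR M * h) by nra.
    pose proof (Hdec (y - (INR M + 1) * h) y h Hy ltac:(nra) Hh) as K.
    replace (y - (INR M + 1) * h + h) with (y - INR M * h) in K by ring.
    specialize (IH Hy'); lra.
Qed.

Lemma increments_sum_le_increasing :
  (forall a b d, 0 < a -> a < b -> 0 < d -> g (a + d) - g a <= g (b + d) - g b) ->
  forall y h (M : nat), 0 < y -> 0 < h ->
  INR M * (g (y + h) - g y) <= g (y + INR M * h) - g y.
Proof.
  intros Hinc y h M Hy Hh; induction M as [|M IH].
  - simpl; replace (y + 0 * h) with y by ring; lra.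
  - rewrite S_INR; pose proof (pos_INR M).
    assert (K : g (y + h) - g y <= g (y + INR M * h + h) - g (y + INR M * h)).
    { destruct (Rle_lt_or_eq_dec 0 (INR M) (pos_INR M)) as [HM|HM].
      - apply Hinc; nra.
      - rewrite <- HM, Rmult_0_l, Rplus_0_r; lra. }
    replace (y + INR M * h + h) with (y + (INR M + 1) * h) in K by ring; lra.
Qed.
Lemma continuity_pt_of_window_bound c : 0 < c ->
  (forall y h (M : nat), 0 < h -> c / 2 <= y - INR M * h -> y + INR M * h <= 2 * c ->
     INR M * (g (y + h) - g y) <= g (2 * c) - g (c / 2)) ->
  continuity_pt g c.
Proof.
  intros Hc Hwin; apply continuity_pt_of_increment_bound with (g (2 * c) - g (c / 2));
    [exact g_mono | exact Hc |].
  intro M; pose proof (pos_INR M).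
  exists (c / (4 * (INR M + 1))); split; [apply Rdiv_lt_0_compat; lra|].
  set (w := c / (4 * (INR M + 1))).
  assert (Hw : 4 * (INR M + 1) * w = c) by (unfold w; field; lra).
  intros y z Hy Hyz Hz.
  destruct (Req_dec y z) as [<-|Hne].
  { pose proof (g_mono (c / 2) (2 * c) ltac:(lra) ltac:(lra)); lra. }
  replace z with (y + (z - y)) by ring.
  assert (INR M * (z - y) <= INR M * (2 * w)) by (apply Rmult_le_compat_l; lra).
  apply Hwin; nra.
Qed.

Lemma continuity_of_decreasing_increments :
  (forall a b d, 0 < a -> a < b -> 0 < d -> g (b + d) - g b <= g (a + d) - g a) ->
  forall c, 0 < c -> continuity_pt g c.
Proof.
  intros Hdec c Hc; apply continuity_pt_of_window_bound; [exact Hc|].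
  intros y h M Hh Hlo Hhi; pose proof (pos_INR M).
  pose proof (increments_sum_le_decreasing Hdec y h M Hh ltac:(lra)).
  pose proof (g_mono (c / 2) (y - INR M * h) ltac:(lra) Hlo).
  pose proof (g_mono y (2 * c) ltac:(nra) ltac:(nra)).
  lra.
Qed.

Lemma continuity_of_increasing_increments :
  (forall a b d, 0 < a -> a < b -> 0 < d -> g (a + d) - g a <= g (b + d) - g b) ->
  forall c, 0 < c -> continuity_pt g c.
Proof.
  intros Hinc c Hc; apply continuity_pt_of_window_bound; [exact Hc|].
  intros y h M Hh Hlo Hhi; pose proof (pos_INR M).
  pose proof (increments_sum_le_increasing Hinc y h M ltac:(nra) Hh).
  pose proof (g_mono (c / 2) y ltac:(lra) ltac:(nra)).
  pose proof (g_mono (y + INR M * h) (2 * c) ltac:(nra) Hhi).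
  lra.
Qed.

Lemma strictly_concave_pos_of_increments :
  (forall a b d, 0 < a -> a < b -> 0 < d -> g (b + d) - g b < g (a + d) - g a) ->
  strictly_concave_pos g.
Proof.
  intro Hdec; apply strictly_concave_pos_of_midpoint.
  - apply continuity_of_decreasing_increments; intros; left; auto.
  - intros p q Hp Hpq.
    pose proof (Hdec p ((p + q) / 2) ((q - p) / 2) Hp ltac:(lra) ltac:(lra)) as K.
    replace ((p + q) / 2 + (q - p) / 2) with q in K by field.
    replace (p + (q - p) / 2) with ((p + q) / 2) in K by field.
    lra.
Qed.

Lemma strictly_convex_pos_of_increments :
  (forall a b d, 0 < a -> a < b -> 0 < d -> g (a + d) - g a < g (b + d) - g b) ->
  strictly_convex_pos g.
Proof.
  intro Hinc.
  assert (Hopp : strictly_concave_pos (fun y => - g y)).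
  { apply strictly_concave_pos_of_midpoint.
    - intros c Hc; apply continuity_pt_opp.
      apply continuity_of_increasing_increments; [intros; left; auto | exact Hc].
    - intros p q Hp Hpq.
      pose proof (Hinc p ((p + q) / 2) ((q - p) / 2) Hp ltac:(lra) ltac:(lra)) as K.
      replace ((p + q) / 2 + (q - p) / 2) with q in K by field.
      replace (p + (q - p) / 2) with ((p + q) / 2) in K by field.
      lra. }
  intros u v t Hu Hv Huv Ht; pose proof (Hopp u v t Hu Hv Huv Ht); simpl in *; lra.
Qed.
End MonotoneIncrements.

Lemma Series_pos_of_term (u : nat -> R) k : ex_series u ->
  (forall n, 0 <= u n) -> 0 < u k -> 0 < Series u.
Proof.
  intros Hu Hnn Hk.
  rewrite (Series_incr_n u (S k)) by (auto; lia); simpl pred.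
  assert (u k <= sum_f_R0 u k) by (apply sum_f_R0_ge_term; auto).
  assert (0 <= Series (fun n => u (S k + n)%nat)).
  { replace 0 with (Series (fun n => 0 * u n)) by (rewrite Series_scal_l; ring).
    apply Series_le; [intro n; split; [lra | rewrite Rmult_0_l; apply Hnn]|].
    apply ex_series_incr_n, Hu. }
  lra.
Qed.

Section PowerSeries.
Variables (f : nat -> R) (x : R).
Hypotheses (f_pos : forall n, 0 < f n) (x_pos : 0 < x).
Hypothesis fser_ex : forall al, 0 < al -> ex_series (fun n => coef f al n * x ^ n).

Lemma coef_term_pos al n : 0 < al -> 0 < coef f al n * x ^ n.
Proof.
  intro Hal; rewrite coef_negbin.
  pose proof (f_pos n); pose proof (negbin_pos al n Hal); pose proof (pow_lt x n x_pos).
  apply Rmult_lt_0_compat; [apply Rmult_lt_0_compat|]; assumption.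
Qed.

Lemma fser_pos al : 0 < al -> 0 < fser f al x.
Proof.
  intro Hal; apply Series_pos_of_term with 0%nat; [now apply fser_ex | |];
    intros; try apply Rlt_le; apply coef_term_pos; exact Hal.
Qed.

Lemma fser_le u v : 0 < u -> u <= v -> fser f u x <= fser f v x.
Proof.
  intros Hu Huv; apply Series_le; [|apply fser_ex; lra].
  intro n; split; [left; apply coef_term_pos, Hu|].
  apply Rmult_le_compat_r; [left; apply pow_lt, x_pos|].
  unfold coef; apply Rmult_le_compat_r; [left; apply Rinv_0_lt_compat, INR_fact_lt_0|].
  apply Rmult_le_compat_l; [left; apply f_pos|]; apply poch_le_compat; assumption.
Qed.

Lemma phi_is_series a b d : 0 < a -> 0 < b -> 0 < d ->
  is_series (fun m => phi f a b d m * x ^ m)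
    (fser f (a + d) x * fser f b x - fser f (b + d) x * fser f a x).
Proof.
  intros Ha Hb Hd.
  pose (c al n := coef f al n * x ^ n).
  assert (Hc : forall al, 0 < al -> is_series (c al) (fser f al x))
    by (intros; apply Series_correct, fser_ex; assumption).
  assert (Hc0 : forall al n, 0 < al -> 0 <= c al n)
    by (intros; left; apply coef_term_pos; assumption).
  pose proof (is_series_mult_pos _ _ _ _ (Hc (a + d) ltac:(lra)) (Hc b Hb)
                (fun n => Hc0 (a + d) n ltac:(lra)) (fun n => Hc0 b n Hb)) as H1.
  pose proof (is_series_mult_pos _ _ _ _ (Hc (b + d) ltac:(lra)) (Hc a Ha)
                (fun n => Hc0 (b + d) n ltac:(lra)) (fun n => Hc0 a n Ha)) as H2.
  eapply is_series_ext; [|exact (is_series_minus _ _ _ _ H1 H2)].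
  intro m; unfold minus, plus, opp; simpl; unfold phi, c.
  rewrite Rmult_comm, scal_sum, <- Rminus_def, <- minus_sum; symmetry.
  apply sum_eq; intros k Hk.
  replace (x ^ m) with (x ^ k * x ^ (m - k)) by (rewrite <- pow_add; f_equal; lia).
  ring.
Qed.

Lemma fser_cross_sign s a b d : signed_log_concave s f -> 0 < a -> a < b -> 0 < d ->
  0 < s * (fser f (a + d) x * fser f b x - fser f (b + d) x * fser f a x).
Proof.
  intros Hlc Ha Hab Hd.
  assert (Hterm : forall m, 0 <= s * phi f a b d m * x ^ m).
  { intros [|[|m]]; [rewrite phi_0 | rewrite phi_1 |]; try lra.
    pose proof (phi_sign f s a b Hlc Ha Hab d (S (S m)) Hd ltac:(lia)).
    pose proof (pow_lt x (S (S m)) x_pos); nra. }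
  assert (HS : is_series (fun m => s * phi f a b d m * x ^ m)
    (s * (fser f (a + d) x * fser f b x - fser f (b + d) x * fser f a x))).
  { apply (is_series_ext (fun m => scal s (phi f a b d m * x ^ m))).
    - intro m; unfold scal; simpl; unfold mult; simpl; ring.
    - exact (is_series_scal_l s _ _ (phi_is_series a b d Ha ltac:(lra) Hd)). }
  rewrite <- (is_series_unique _ _ HS).
  apply Series_pos_of_term with 2%nat; [eexists; exact HS | exact Hterm |].
  pose proof (phi_sign f s a b Hlc Ha Hab d 2 Hd ltac:(lia)).
  pose proof (pow_lt x 2 x_pos); simpl; nra.
Qed.

Lemma ln_fser_le u v : 0 < u -> u <= v -> ln (fser f u x) <= ln (fser f v x).
Proof. intros Hu Huv; apply ln_le; [apply fser_pos, Hu | apply fser_le; assumption]. Qed.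

Lemma ln_fser_increments s a b d : signed_log_concave s f -> 0 < a -> a < b -> 0 < d ->
  s * (ln (fser f (b + d) x) - ln (fser f b x)) <
  s * (ln (fser f (a + d) x) - ln (fser f a x)).
Proof.
  intros Hlc Ha Hab Hd; pose proof (fser_cross_sign s a b d Hlc Ha Hab Hd) as H.
  pose proof (fser_pos (a + d) ltac:(lra)); pose proof (fser_pos b ltac:(lra));
    pose proof (fser_pos (b + d) ltac:(lra)); pose proof (fser_pos a Ha).
  set (A := fser f (a + d) x) in *; set (B := fser f b x) in *;
    set (C := fser f (b + d) x) in *; set (D := fser f a x) in *.
  assert (Hln : ln (A * B) - ln (C * D) = (ln A - ln D) - (ln C - ln B))
    by (rewrite !ln_mult by assumption; ring).
  destruct (Rtotal_order s 0) as [Hs|[->|Hs]]; [| lra |].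
  - assert (ln (A * B) < ln (C * D)) by (apply ln_increasing; nra). nra.
  - assert (ln (C * D) < ln (A * B)) by (apply ln_increasing; nra). nra.
Qed.
End PowerSeries.

Theorem theorem1 (f : nat -> R) (Hf : forall n, 0 < f n)
  (a b d : R) (ha : 0 < a) (hab : a < b) (hd : 0 < d) :
  phi f a b d 0 = 0 /\ phi f a b d 1 = 0 /\
  ((forall n : nat, f (S (S n)) / f (S n) < f (S n) / f n) ->
     (forall m : nat, (2 <= m)%nat -> 0 < phi f a b d m) /\
     (forall x : R, 0 < x ->
        (forall a' : R, 0 < a' -> ex_series (fun n => coef f a' n * x ^ n)) ->
        strictly_concave_pos (fun a' => ln (fser f a' x)))) /\
  ((forall n : nat, f (S n) / f n < f (S (S n)) / f (S n)) ->
     (forall m : nat, (2 <= m)%nat -> phi f a b d m < 0) /\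
     (forall x : R, 0 < x ->
        (forall a' : R, 0 < a' -> ex_series (fun n => coef f a' n * x ^ n)) ->
        strictly_convex_pos (fun a' => ln (fser f a' x)))).
Proof.
  split; [apply phi_0|]; split; [apply phi_1|]; split.
  - intro Hdecr; pose proof (signed_log_concave_of_ratio_decr f Hf Hdecr) as Hlc; split.
    + intros m Hm; pose proof (phi_sign f 1 a b Hlc ha hab d m hd Hm); lra.
    + intros x Hx Hex; apply strictly_concave_pos_of_increments.
      * exact (ln_fser_le f x Hf Hx Hex).
      * intros a0 b0 d0 Ha0 Hab0 Hd0.
        pose proof (ln_fser_increments f x Hf Hx Hex 1 a0 b0 d0 Hlc Ha0 Hab0 Hd0); lra.
  - intro Hincr; pose proof (signed_log_concave_of_ratio_incr f Hf Hincr) as Hlc; split.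
    + intros m Hm; pose proof (phi_sign f (-1) a b Hlc ha hab d m hd Hm); lra.
    + intros x Hx Hex; apply strictly_convex_pos_of_increments.
      * exact (ln_fser_le f x Hf Hx Hex).
      * intros a0 b0 d0 Ha0 Hab0 Hd0.
        pose proof (ln_fser_increments f x Hf Hx Hex (-1) a0 b0 d0 Hlc Ha0 Hab0 Hd0); lra.
Qed.
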